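(* Let $W$ satisfy the mixing assumptions in the context, and consider Algorithm DDS-F (described in the context) with all poll directions unit vectors and a forcing function $\rho:\mathbb{R}^+\to\mathbb{R}^+$, where the stepsizes $\alpha_i^{(k)}$ admit sequences $\{\alpha^{(k)}_{\min}\}$, $\{\alpha^{(k)}_{\max}\}$ such that (i) $\alpha^{(k)}_{\min}\le\alpha^{(k)}_i\le\alpha^{(k)}_{\max}$ for all $i,k$; (ii) $\sum_k(\alpha^{(k)}_{\max})^2<\infty$; (iii) $\sum_k\rho(\alpha^{(k)}_{\min})=\infty$. Then the iterates $\mathbf{x}^{(k)}=[x_1^{(k)};\dots;x_m^{(k)}]\in\mathbb{R}^{mn}$ satisfy $$\lim_{k\to\infty}\left\|\mathbf{x}^{(k)}-\widehat W\mathbf{x}^{(k)}\right\|=0.$$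
   Context: Setting: $m$ agents on an undirected connected graph $\mathcal{G}=(\{1,\dots,m\},\mathcal{E})$; $\mathcal{N}_i=\{j\neq i:(i,j)\in\mathcal{E}\}$. Mixing assumptions on $W=[w_{ij}]\in\mathbb{R}^{m\times m}$ with eigenvalues $\lambda_1(W)\ge\dots\ge\lambda_m(W)$: $W$ symmetric with nonnegative entries, $w_{ij}>0$ iff $i=j$ or $j\in\mathcal{N}_i$; $\lambda_1(W)=1$, $\lambda_2(W)<1$; $W\mathbf{1}=\mathbf{1}$; $-1<\lambda_m(W)\le0$. $\widehat W=W\otimes I_n$. Algorithm DDS-F (local functions $f_i:\mathbb{R}^n\to\mathbb{R}$, poll sets $D_i^{(k)}\subset\mathbb{R}^n$, stepsizes $\alpha_i^{(k)}>0$): start from $x_1^{(0)}=\dots=x_m^{(0)}$. At iteration $k$, each agent $i$ checks whether some $d\in D^{(k)}_i$ satisfies $f_i(x_i^{(k)}+\alpha_i^{(k)}d)\le f_i(x_i^{(k)})-\rho(\alpha_i^{(k)})$. If so, $x_i^{(k+1)}=\sum_{j\in\mathcal{N}_i\cup\{i\}}w_{ij}x_j^{(k)}+\alpha_i^{(k)}d$; otherwise $x_i^{(k+1)}=\sum_{j\in\mathcal{N}_i\cup\{i\}}w_{ij}x_j^{(k)}$. *)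

From HB Require Import structures.
From mathcomp Require Import all_boot all_order all_algebra.
From mathcomp Require Import all_classical all_reals all_analysis.
Set Implicit Arguments. Unset Strict Implicit. Unset Printing Implicit Defensive.
Import Order.TTheory GRing.Theory Num.Theory.
Import numFieldNormedType.Exports.
Local Open Scope ring_scope.
Local Open Scope classical_set_scope.

Definition eucl_norm (R : realType) (n : nat) (v : 'rV[R]_n) : R :=
  Num.sqrt (\sum_(j < n) v 0 j ^+ 2).

(* Euclidean norm of the stacked vector [x_1; ...; x_m] in R^{mn},
   where X : 'M_(m, n) has row i equal to x_i (i.e. the Frobenius norm). *)
Definition stack_norm (R : realType) (m n : nat) (X : 'M[R]_(m, n)) : R :=
  Num.sqrt (\sum_(i < m) \sum_(j < n) X i j ^+ 2).

(* (W \otimes I_n) x, written on the row-stacked representation: the block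
   of agent i is sum_j w_ij x_j, i.e. the matrix W *m X. *)
Definition kronI_apply (R : realType) (m n : nat) (W : 'M[R]_m)
  (X : 'M[R]_(m, n)) : 'M[R]_(m, n) := W *m X.

(* s is the list of eigenvalues of W (with multiplicity) in nonincreasing
   order: lambda_1(W) = s`_0 >= ... >= lambda_m(W) = s`_(m-1). *)
Definition eigen_seq (R : realType) (m : nat) (W : 'M[R]_m) (s : seq R) : Prop :=
  sorted (>=%R) s /\ char_poly W = \prod_(a <- s) ('X - a%:P).

Definition undirected_connected (m : nat) (adj : rel 'I_m) : Prop :=
  symmetric adj /\ irreflexive adj /\ (forall i j : 'I_m, connect adj i j).

Definition mixing (R : realType) (m : nat) (adj : rel 'I_m) (W : 'M[R]_m) : Prop :=
  [/\ W^T = W,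
      (forall i j, 0 <= W i j),
      (forall i j, 0 < W i j <-> (i == j) || adj i j),
      (exists s : seq R, [/\ eigen_seq W s, s`_0 = 1, s`_1 < 1,
                              -1 < s`_m.-1 & s`_m.-1 <= 0])
    & W *m (const_mx 1 : 'cV[R]_m) = const_mx 1].

Definition forcing_function (R : realType) (rho : R -> R) : Prop :=
  [/\ (forall t, 0 < t -> 0 < rho t),
      (forall s t, 0 < s -> s <= t -> rho s <= rho t)
    & (fun t => rho t / t) @ 0^'+ --> (0 : R)].

Definition dds_step (R : realType) (m n : nat) (adj : rel 'I_m) (W : 'M[R]_m)
  (f : 'I_m -> 'rV[R]_n -> R) (rho : R -> R) (D : set 'rV[R]_n) (a : R)
  (xk : 'I_m -> 'rV[R]_n) (i : 'I_m) (xnext : 'rV[R]_n) : Prop :=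
  let mix := \sum_(j < m | (j == i) || adj i j) W i j *: xk j in
  (exists2 d, D d & f i (xk i + a *: d) <= f i (xk i) - rho a
                    /\ xnext = mix + a *: d)
  \/ ((forall d, D d -> ~ (f i (xk i + a *: d) <= f i (xk i) - rho a))
      /\ xnext = mix).

From HB Require Import structures.
From mathcomp Require Import all_boot all_order all_algebra.
From mathcomp Require Import all_classical all_reals all_analysis.
From mathcomp Require Import ring lra zify.
Import Order.TTheory GRing.Theory Num.Theory.
Import numFieldNormedType.Exports.
Local Open Scope ring_scope.
Local Open Scope classical_set_scope.
Set Implicit Arguments. Unset Strict Implicit. Unset Printing Implicit Defensive.

(* The disagreement [Y k = X k - W X k] of the stacked iterates satisfies
   [Y (k+1) = W Y k + (I - W) E k], where the rows of [E k = X (k+1) - W X k]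
   are the poll steps, of norm at most [amax k].  A doubly stochastic [W] is
   nonexpansive in the Frobenius norm, and it strictly contracts matrices with
   zero column sums such as [Y k]: the loss [|v|^2 - |W v|^2] dominates the
   Dirichlet energy of [v] on the connected graph, which dominates [|v|^2] for
   [v] of zero mean by a Poincare inequality along paths.  Young's inequality
   then gives [|Y (k+1)|^2 <= r |Y k|^2 + K amax_k^2] with [r < 1], and the
   summability of [amax_k^2] forces [|Y k| -> 0]. *)

Section PerturbedContraction.
Variables (R : realType) (r : R) (a g : R ^nat).
Hypotheses (r_lt1 : r < 1) (a_ge0 : forall k, 0 <= a k) (g_ge0 : forall k, 0 <= g k).
Hypothesis a_rec : forall k, a k.+1 <= r * a k + g k.

Lemma is_cvg_series_perturbed_contraction : cvgn (series g) -> cvgn (series a).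
Proof.
move=> g_cvg; apply: nondecreasing_is_cvgn; first exact: nondecreasing_series.
exists ((a 0%N + limn (series g)) / (1 - r)) => _ [N _ <-].
have a_le : series a N <= series a N.+1 by apply: nondecreasing_series.
have g_le : series g N <= limn (series g).
  by apply: nondecreasing_cvgn_le => //; exact: nondecreasing_series.
have a_shift : series a N.+1 <= a 0%N + r * series a N + series g N.
  rewrite /series /= big_nat_recl // -addrA lerD2l mulr_sumr -big_split /=.
  by apply: ler_sum => k _; exact: a_rec.
rewrite ler_pdivlMr ?subr_gt0 //; lra.
Qed.

Lemma perturbed_contraction_cvg0 : cvgn (series g) -> a @ \oo --> 0.
Proof. by move/is_cvg_series_perturbed_contraction/cvg_series_cvg_0. Qed.

End PerturbedContraction.

Lemma sum_sqr_diff (R : comRingType) (I : finType) (v : I -> R) :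
  \sum_i \sum_j (v i - v j) ^+ 2 = 2 * #|I|%:R * \sum_i v i ^+ 2 - 2 * (\sum_i v i) ^+ 2.
Proof.
rewrite (eq_bigr (fun i => #|I|%:R * v i ^+ 2 + \sum_j v j ^+ 2 - 2 * v i * \sum_j v j)).
  rewrite sumrB big_split /= sumr_const -mulr_suml -!mulr_sumr -mulr_natr; ring.
move=> i _; rewrite (eq_bigr (fun j => v i ^+ 2 + v j ^+ 2 - 2 * v i * v j)).
  by rewrite sumrB big_split /= sumr_const -mulr_sumr -mulr_natr; ring.
by move=> j _; ring.
Qed.

Lemma sum_weighted_sqr (R : comRingType) (I : finType) (a v : I -> R) :
  \sum_j a j = 1 ->
  2 * \sum_j a j * v j ^+ 2 =
  2 * (\sum_j a j * v j) ^+ 2 + \sum_j \sum_l a j * a l * (v j - v l) ^+ 2.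
Proof.
move=> a_sum1; set S := \sum_j a j * v j ^+ 2; set T := \sum_j a j * v j.
have inner j : \sum_l a j * a l * (v j - v l) ^+ 2 =
    a j * v j ^+ 2 + a j * S - 2 * (a j * v j) * T.
  rewrite (eq_bigr (fun l => a l * (a j * v j ^+ 2) + a j * (a l * v l ^+ 2)
                             - 2 * (a j * v j) * (a l * v l))); last by move=> l _; ring.
  by rewrite sumrB big_split /= -mulr_suml a_sum1 mul1r -!mulr_sumr.
rewrite (eq_bigr _ (fun j _ => inner j)) sumrB big_split /= -!mulr_suml a_sum1 mul1r.
by rewrite -mulr_sumr -/S -/T; ring.
Qed.

Section EdgeEnergy.
Variables (R : realType) (m : nat) (adj : rel 'I_m).

Definition edge_energy (v : 'I_m -> R) : R :=
  \sum_i \sum_(l | adj i l) (v i - v l) ^+ 2.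

Lemma edge_energy_ge0 v : 0 <= edge_energy v.
Proof. by do 2 apply: sumr_ge0 => ? _; exact: sqr_ge0. Qed.

Lemma sqr_le_edge_energy v i l : adj i l -> (v i - v l) ^+ 2 <= edge_energy v.
Proof.
move=> adj_il; rewrite /edge_energy (bigD1 i) //= (bigD1 l) //= -addrA lerDl.
apply: addr_ge0; first by apply: sumr_ge0 => ? _; exact: sqr_ge0.
by do 2 apply: sumr_ge0 => ? _; exact: sqr_ge0.
Qed.

Lemma path_dist_le v i p : path adj i p ->
  `|v i - v (last i p)| <= (size p)%:R * Num.sqrt (edge_energy v).
Proof.
elim: p i => [|j p IHp] i /=; first by rewrite subrr normr0 mul0r.
move=> /andP[adj_ij path_jp].
have step : `|v i - v j| <= Num.sqrt (edge_energy v).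
  by rewrite -sqrtr_sqr ler_sqrt ?edge_energy_ge0 ?sqr_le_edge_energy.
rewrite -(subrKA (v j)) -addn1 natrD mulrDl mul1r [leRHS]addrC.
exact: le_trans (ler_normD _ _) (lerD step (IHp j path_jp)).
Qed.

Lemma connect_sqr_dist_le v i j : connect adj i j ->
  (v i - v j) ^+ 2 <= m%:R ^+ 2 * edge_energy v.
Proof.
move=> /connectP[p path_p ->]; have [q path_q uniq_q _] := shortenP path_p.
have size_q : (size q <= m)%N.
  have := max_card (mem (i :: q)); rewrite card_ord.
  by move/card_uniqP: uniq_q => -> /=; lia.
rewrite -real_normK ?num_real // -[edge_energy v]sqr_sqrtr ?edge_energy_ge0 // -exprMn.
rewrite lerXn2r ?nnegrE ?mulr_ge0 ?sqrtr_ge0 //.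
apply: le_trans (path_dist_le v path_q) _.
by rewrite ler_wpM2r ?sqrtr_ge0 ?ler_nat.
Qed.

Lemma poincare_edge_energy v : (forall i j, connect adj i j) -> \sum_i v i = 0 ->
  2 * \sum_i v i ^+ 2 <= m%:R ^+ 3 * edge_energy v.
Proof.
move=> adj_connected v_sum0.
have [m_gt0|] := ltnP 0 m; last first.
  rewrite leqn0 => /eqP m0; rewrite big1 ?mulr0 ?mulr_ge0 ?exprn_ge0 ?edge_energy_ge0 //.
  by move=> i _; have := ltn_ord i; lia.
have diff_le : \sum_i \sum_j (v i - v j) ^+ 2 <= m%:R ^+ 4 * edge_energy v.
  apply: (le_trans (y := \sum_(i < m) \sum_(j < m) m%:R ^+ 2 * edge_energy v)).
    by do 2 apply: ler_sum => ? _; exact: connect_sqr_dist_le.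
  rewrite !sumr_const !card_ord; lra.
rewrite sum_sqr_diff v_sum0 card_ord expr0n mulr0 subr0 in diff_le.
rewrite -(@ler_pM2l _ m%:R) ?ltr0n //; lra.
Qed.

End EdgeEnergy.

Definition stack_norm2 (R : realType) (m n : nat) (Z : 'M[R]_(m, n)) : R :=
  \sum_i \sum_j Z i j ^+ 2.

Lemma stack_norm2_ge0 (R : realType) m n (Z : 'M[R]_(m, n)) : 0 <= stack_norm2 Z.
Proof. by do 2 apply: sumr_ge0 => ? _; exact: sqr_ge0. Qed.

Lemma stack_norm2N (R : realType) m n (Z : 'M[R]_(m, n)) :
  stack_norm2 (- Z) = stack_norm2 Z.
Proof. by apply: eq_bigr => i _; apply: eq_bigr => j _; rewrite mxE sqrrN. Qed.

Lemma stack_norm2D_le (R : realType) m n (A B : 'M[R]_(m, n)) (e : R) : 0 < e ->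
  stack_norm2 (A + B) <= (1 + e) * stack_norm2 A + (1 + e^-1) * stack_norm2 B.
Proof.
move=> e_gt0; rewrite !mulr_sumr -big_split /=; apply: ler_sum => i _.
rewrite !mulr_sumr -big_split /=; apply: ler_sum => j _; rewrite mxE.
have young : 0 <= (e * A i j - B i j) ^+ 2 / e by rewrite divr_ge0 ?sqr_ge0 ?ltW.
suff -> : (1 + e) * A i j ^+ 2 + (1 + e^-1) * B i j ^+ 2 =
          (A i j + B i j) ^+ 2 + (e * A i j - B i j) ^+ 2 / e by lra.
by field; rewrite gt_eqF.
Qed.

Lemma sub_mulmx_decomp (R : comRingType) m n (W : 'M[R]_m) (X X' : 'M[R]_(m, n)) :
  X' - W *m X' = W *m (X - W *m X) + ((X' - W *m X) - W *m (X' - W *m X)).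
Proof.
rewrite !mulmxBr; set P := W *m X; set Q := W *m P; set S := W *m X'.
by apply/matrixP => i j; rewrite !mxE; ring.
Qed.

Section DoublyStochastic.
Variables (R : realType) (m : nat) (W : 'M[R]_m).
Hypotheses (W_ge0 : forall i j, 0 <= W i j)
  (W_row1 : forall i, \sum_j W i j = 1) (W_col1 : forall j, \sum_i W i j = 1).

Definition mix_variance (v : 'I_m -> R) : R :=
  \sum_i \sum_j \sum_l W i j * W i l * (v j - v l) ^+ 2.

Lemma mix_variance_ge0 v : 0 <= mix_variance v.
Proof. by do 3 apply: sumr_ge0 => ? _; rewrite mulr_ge0 ?sqr_ge0 ?mulr_ge0. Qed.

Lemma mix_energy_balance v :
  2 * \sum_i (\sum_j W i j * v j) ^+ 2 + mix_variance v = 2 * \sum_j v j ^+ 2.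
Proof.
rewrite mulr_sumr -big_split /=.
under eq_bigr => i _ do rewrite -sum_weighted_sqr //.
by rewrite -mulr_sumr exchange_big; under eq_bigr => j _ do rewrite -mulr_suml W_col1 mul1r.
Qed.

Lemma mix_sqr_le v : \sum_i (\sum_j W i j * v j) ^+ 2 <= \sum_j v j ^+ 2.
Proof. by have := mix_energy_balance v; have := mix_variance_ge0 v; lra. Qed.

Lemma stack_norm2_mulmx_le n (Z : 'M[R]_(m, n)) : stack_norm2 (W *m Z) <= stack_norm2 Z.
Proof.
rewrite /stack_norm2 exchange_big [leRHS]exchange_big /=; apply: ler_sum => c _.
under eq_bigr => i _ do rewrite mxE.
exact: (mix_sqr_le (fun j => Z j c)).
Qed.

Lemma stack_norm2_sub_mulmx_le n (Z : 'M[R]_(m, n)) :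
  stack_norm2 (Z - W *m Z) <= 4 * stack_norm2 Z.
Proof.
apply: le_trans (stack_norm2D_le _ _ ltr01) _; rewrite stack_norm2N invr1.
by have := stack_norm2_mulmx_le Z; lra.
Qed.

Lemma sum_col_sub_mulmx n (Z : 'M[R]_(m, n)) c : \sum_i (Z - W *m Z) i c = 0.
Proof.
under eq_bigr => i _ do rewrite !mxE.
rewrite sumrB exchange_big /=.
by under [X in _ - X]eq_bigr => l _ do rewrite -mulr_suml W_col1 mul1r; rewrite subrr.
Qed.

Variables (adj : rel 'I_m) (d : R).
Hypotheses (adj_connected : forall i j, connect adj i j) (d_gt0 : 0 < d)
  (d_le : forall i l, adj i l -> d <= W i i * W i l).

Lemma edge_energy_le_mix_variance v : d * edge_energy adj v <= mix_variance v.
Proof.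
rewrite mulr_sumr; apply: ler_sum => i _; rewrite [leRHS](bigD1 i) //= -[leLHS]addr0.
apply: lerD; last by do 2 apply: sumr_ge0 => ? _; rewrite mulr_ge0 ?sqr_ge0 ?mulr_ge0.
rewrite mulr_sumr big_mkcond /=; apply: ler_sum => l _; case: ifP => [adj_il|_].
  by rewrite ler_wpM2r ?sqr_ge0 ?d_le.
by rewrite mulr_ge0 ?sqr_ge0 ?mulr_ge0.
Qed.

Lemma mix_sqr_contract v : \sum_i v i = 0 ->
  \sum_i (\sum_j W i j * v j) ^+ 2 <= (1 - d / (m%:R ^+ 3 + 1)) * \sum_j v j ^+ 2.
Proof.
move=> v_sum0; have := mix_energy_balance v; have := edge_energy_le_mix_variance v.
have := poincare_edge_energy adj_connected v_sum0; have := edge_energy_ge0 adj v.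
have : 0 <= m%:R ^+ 3 :> R by rewrite exprn_ge0.
set S := \sum_j v j ^+ 2; set T := \sum_i (\sum_j W i j * v j) ^+ 2.
set E := edge_energy adj v; set M := m%:R ^+ 3; set V := mix_variance v.
clearbody S T E M V => M_ge0 E_ge0 poincare le_var balance.
have h1 : d * (2 * S) <= d * (M * E) := ler_wpM2l (ltW d_gt0) poincare.
have h2 : (M + 1) * (d * E) <= (M + 1) * V := ler_wpM2l (addr_ge0 M_ge0 ler01) le_var.
have dE_ge0 : 0 <= d * E := mulr_ge0 (ltW d_gt0) E_ge0.
have key : d * S <= (M + 1) * (S - T) by rewrite (_ : S - T = V / 2); lra.
suff : d / (M + 1) * S <= S - T by lra.
by rewrite mulrAC ler_pdivrMr ?ltr_wpDl //; lra.
Qed.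

Lemma stack_norm2_mulmx_contract n (Z : 'M[R]_(m, n)) : (forall c, \sum_i Z i c = 0) ->
  stack_norm2 (W *m Z) <= (1 - d / (m%:R ^+ 3 + 1)) * stack_norm2 Z.
Proof.
move=> Z_sum0; rewrite /stack_norm2 exchange_big [in leRHS]exchange_big /= mulr_sumr.
apply: ler_sum => c _; under eq_bigr => i _ do rewrite mxE.
exact: (mix_sqr_contract (Z_sum0 c)).
Qed.

Lemma disagreement_contraction n : exists r K, [/\ r < 1, 0 <= K &
  forall X X' : 'M[R]_(m, n), stack_norm2 (X' - W *m X') <=
    r * stack_norm2 (X - W *m X) + K * stack_norm2 (X' - W *m X)].
Proof.
have M_gt0 : 0 < m%:R ^+ 3 + 1 :> R by rewrite ltr_wpDl ?exprn_ge0.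
move: (@stack_norm2_mulmx_contract n) (divr_gt0 d_gt0 M_gt0).
set c := d / _ => contract c_gt0; clearbody c.
have e_gt0 : 0 < c / 2 by rewrite divr_gt0.
have e_inv_gt0 : 0 < (c / 2)^-1 by rewrite invr_gt0.
exists ((1 + c / 2) * (1 - c)), ((1 + (c / 2)^-1) * 4); split; [nra | lra |].
move=> X X'; rewrite (sub_mulmx_decomp W X).
apply: le_trans (stack_norm2D_le _ _ e_gt0) _; rewrite -!mulrA.
apply: lerD; apply: ler_wpM2l.
- by lra.
- exact/contract/sum_col_sub_mulmx.
- by lra.
- exact: stack_norm2_sub_mulmx_le.
Qed.

End DoublyStochastic.

Section Mixing.
Variables (R : realType) (m : nat) (adj : rel 'I_m) (W : 'M[R]_m).
Hypothesis W_mixing : mixing adj W.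

Lemma mixing_ge0 i j : 0 <= W i j.
Proof. by case: W_mixing. Qed.

Lemma mixing_row_sum i : \sum_j W i j = 1.
Proof.
case: W_mixing => _ _ _ _ /(congr1 (fun M : 'cV_m => M i 0)); rewrite !mxE => <-.
by apply: eq_bigr => j _; rewrite mxE mulr1.
Qed.

Lemma mixing_col_sum j : \sum_i W i j = 1.
Proof.
case: W_mixing => W_sym _ _ _ _; rewrite -(mixing_row_sum j).
by apply: eq_bigr => i _; rewrite -[in RHS]W_sym mxE.
Qed.

Lemma mixing_support i l : ~~ ((l == i) || adj i l) -> W i l = 0.
Proof.
case: W_mixing => _ W_ge0 W_pos _ _ not_nbr.
apply/eqP; rewrite eq_le W_ge0 andbT leNgt; apply/negP => /W_pos.
by rewrite eq_sym (negbTE not_nbr).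
Qed.

Lemma mixing_edge_weight :
  exists2 d, 0 < d & forall i l, adj i l -> d <= W i i * W i l.
Proof.
case: W_mixing => _ _ W_pos _ _.
exists (\big[Num.min/1]_(p | adj p.1 p.2) (W p.1 p.1 * W p.1 p.2)).
  apply: lt_bigmin => // -[i l] /= adj_il.
  by apply: mulr_gt0; apply/W_pos; rewrite ?eqxx ?adj_il ?orbT.
by move=> i l adj_il; exact: (bigmin_le_cond _ (j := (i, l))).
Qed.

End Mixing.

Section DDSStep.
Variables (R : realType) (m n : nat) (adj : rel 'I_m) (W : 'M[R]_m).
Variables (f : 'I_m -> 'rV[R]_n -> R) (rho : R -> R).
Hypothesis W_support : forall i l, ~~ ((l == i) || adj i l) -> W i l = 0.

Definition stack (x : 'I_m -> 'rV[R]_n) : 'M[R]_(m, n) := \matrix_(i, j) x i 0 j.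

Lemma dds_step_sqr_dev D a xk i xnext :
  (forall d, D d -> eucl_norm d = 1) -> dds_step adj W f rho D a xk i xnext ->
  \sum_j (xnext 0 j - \sum_l W i l * xk l 0 j) ^+ 2 <= a ^+ 2.
Proof.
move=> unit_dirs step.
have mixE j :
    (\sum_(l < m | (l == i) || adj i l) W i l *: xk l) 0 j = \sum_l W i l * xk l 0 j.
  rewrite summxE big_mkcond /=; apply: eq_bigr => l _; rewrite mxE.
  by case: ifP => // not_nbr; rewrite W_support ?not_nbr // mul0r.
case: step => [[dir /unit_dirs dir_unit [_ ->]] | [_ ->]]; last first.
  by rewrite big1 ?sqr_ge0 // => j _; rewrite mixE subrr expr0n.
have dir_sqr1 : \sum_j dir 0 j ^+ 2 = 1.
  rewrite -[LHS]sqr_sqrtr; first by rewrite -/(eucl_norm dir) dir_unit expr1n.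
  by apply: sumr_ge0 => j _; exact: sqr_ge0.
under eq_bigr => j _ do rewrite mxE mixE addrC addrK mxE exprMn.
by rewrite -mulr_sumr dir_sqr1 mulr1.
Qed.

Lemma stack_norm2_dds_step D a amax xk xnext :
  (forall i d, D i d -> eucl_norm d = 1) -> (forall i, 0 <= a i <= amax) ->
  (forall i, dds_step adj W f rho (D i) (a i) xk i (xnext i)) ->
  stack_norm2 (stack xnext - W *m stack xk) <= m%:R * amax ^+ 2.
Proof.
move=> unit_dirs a_bounds steps.
apply: (le_trans (y := \sum_(i < m) amax ^+ 2)); last first.
  by rewrite sumr_const card_ord mulr_natl.
apply: ler_sum => i _.
rewrite (eq_bigr (fun j => (xnext i 0 j - \sum_l W i l * xk l 0 j) ^+ 2)); last first.
  by move=> j _; rewrite !mxE; congr ((_ - _) ^+ 2); apply: eq_bigr => l _; rewrite mxE.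
apply: le_trans (dds_step_sqr_dev (unit_dirs i) (steps i)) _.
case/andP: (a_bounds i) => a_ge0 a_le.
by rewrite ler_sqr ?nnegrE // (le_trans a_ge0).
Qed.

End DDSStep.

Theorem theorem2 (R : realType) (m n : nat) (adj : rel 'I_m) (W : 'M[R]_m)
  (f : 'I_m -> 'rV[R]_n -> R) (rho : R -> R)
  (D : nat -> 'I_m -> set 'rV[R]_n) (alpha : nat -> 'I_m -> R)
  (amin amax : nat -> R) (x : nat -> 'I_m -> 'rV[R]_n) :
  undirected_connected adj ->
  mixing adj W ->
  forcing_function rho ->
  (forall k i d, D k i d -> eucl_norm d = 1) ->
  (forall k i, 0 < alpha k i) ->
  (forall k, 0 < amin k) ->
  (forall k i, amin k <= alpha k i /\ alpha k i <= amax k) ->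
  cvg ([series amax k ^+ 2]_k @ \oo) ->
  [series rho (amin k)]_k @ \oo --> +oo ->
  (forall i j, x 0%N i = x 0%N j) ->
  (forall k i, dds_step adj W f rho (D k i) (alpha k i) (x k) i (x k.+1 i)) ->
  (fun k => stack_norm (\matrix_(i, j) x k i 0 j
                        - kronI_apply W (\matrix_(i, j) x k i 0 j)))
    @ \oo --> (0 : R).
Proof.
move=> [_ [_ adj_connected]] W_mixing _ unit_dirs alpha_gt0 _ alpha_bounds
  amax_sqr_summable _ _ steps.
have [d d_gt0 d_le] := mixing_edge_weight W_mixing.
have [r [K [r_lt1 K_ge0 contract]]] := disagreement_contraction
  (mixing_ge0 W_mixing) (mixing_row_sum W_mixing) (mixing_col_sum W_mixing)
  adj_connected d_gt0 d_le n.
pose e k := stack_norm2 (stack (x k) - W *m stack (x k)).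
have e_rec k : e k.+1 <= r * e k + K * (m%:R * amax k ^+ 2).
  apply: le_trans (contract (stack (x k)) _) _; rewrite lerD2l ler_wpM2l //.
  apply: (stack_norm2_dds_step (amax := amax k) (mixing_support W_mixing)
    (unit_dirs k) _ (steps k)).
  by move=> i; rewrite ltW // (alpha_bounds k i).2.
have e_cvg0 : e @ \oo --> 0.
  apply: perturbed_contraction_cvg0 r_lt1 _ _ e_rec _ => [k|k|].
  - exact: stack_norm2_ge0.
  - exact: mulr_ge0 K_ge0 (mulr_ge0 (ler0n _ _) (sqr_ge0 _)).
  - rewrite (_ : (fun k => _) = (K * m%:R) *: (fun k => amax k ^+ 2)).
      exact: is_cvg_seriesZ.
    by apply/funext => k; rewrite mulrA.
by rewrite -sqrtr0; apply: continuous_cvg e_cvg0; exact: sqrt_continuous.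
Qed.
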